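(* Let $C\in\mathscr{C}$ and let $Z_C$ be obtained as follows: choose a distinguished triangle $V\to U\overset{a}{\to}C\to V[1]$ with $U\in\mathcal{U},V\in\mathcal{V}$; choose a distinguished triangle $T[-1]\to S[-1]\overset{b}{\to}U\to T$ with $S\in\mathcal{S},T\in\mathcal{T}$; and choose a distinguished triangle $S[-1]\overset{a\circ b}{\to}C\overset{z_C}{\to}Z_C\to S$. Then: (1) $Z_C\in\mathscr{C}^+$; (2) if $C\in\mathscr{C}^-$, then $Z_C\in\mathcal{H}$.
   Context: $\mathscr{C}$ is a triangulated category with shift $[1]$; subcategories are full, additive, closed under isomorphisms and direct summands. $\mathrm{Ext}^1(X,Y)=\mathscr{C}(X,Y[1])$. $\mathcal{M}\ast\mathcal{N}$ is the full subcategory of objects $C$ admitting a distinguished triangle $M\to C\to N\to M[1]$ with $M\in\mathcal{M}$, $N\in\mathcal{N}$. A cotorsion pair $(\mathcal{U},\mathcal{V})$: $\mathrm{Ext}^1(\mathcal{U},\mathcal{V})=0$ and $\mathscr{C}=\mathcal{U}\ast\mathcal{V}[1]$. Fix a twin cotorsion pair, i.e. cotorsion pairs $(\mathcal{S},\mathcal{T}),(\mathcal{U},\mathcal{V})$ with $\mathrm{Ext}^1(\mathcal{S},\mathcal{V})=0$. Put $\mathcal{W}=\mathcal{T}\cap\mathcal{U}$, $\mathscr{C}^-=\mathcal{S}[-1]\ast\mathcal{W}$, $\mathscr{C}^+=\mathcal{W}\ast\mathcal{V}[1]$, $\mathcal{H}=\mathscr{C}^+\cap\mathscr{C}^-$.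 *)

From HB Require Import structures.
From mathcomp Require Import all_boot all_algebra.
Set Implicit Arguments. Unset Strict Implicit. Unset Printing Implicit Defensive.
Import GRing.Theory.
Local Open Scope ring_scope.

Record TriCat := {
  Obj :> Type;
  Mor : Obj -> Obj -> zmodType;
  mcomp : forall X Y Z : Obj, Mor Y Z -> Mor X Y -> Mor X Z;
  idm : forall X : Obj, Mor X X;
  compA : forall X Y Z W (h : Mor Z W) (g : Mor Y Z) (f : Mor X Y),
      mcomp h (mcomp g f) = mcomp (mcomp h g) f;
  comp1m : forall X Y (f : Mor X Y), mcomp (idm Y) f = f;
  compm1 : forall X Y (f : Mor X Y), mcomp f (idm X) = f;
  compDl : forall X Y Z (g1 g2 : Mor Y Z) (f : Mor X Y),
      mcomp (g1 + g2) f = mcomp g1 f + mcomp g2 f;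
  compDr : forall X Y Z (g : Mor Y Z) (f1 f2 : Mor X Y),
      mcomp g (f1 + f2) = mcomp g f1 + mcomp g f2;
  zobj : Obj;
  zobj_zero : idm zobj = 0;
  biprod_ex : forall X Y : Obj, exists (B : Obj) (i1 : Mor X B) (i2 : Mor Y B)
      (p1 : Mor B X) (p2 : Mor B Y),
      [/\ mcomp p1 i1 = idm X, mcomp p2 i2 = idm Y, mcomp p1 i2 = 0,
          mcomp p2 i1 = 0 & mcomp i1 p1 + mcomp i2 p2 = idm B];
  shift : Obj -> Obj;
  shiftH : forall X Y, Mor X Y -> Mor (shift X) (shift Y);
  shiftH_id : forall X, shiftH (idm X) = idm (shift X);
  shiftH_comp : forall X Y Z (g : Mor Y Z) (f : Mor X Y),
      shiftH (mcomp g f) = mcomp (shiftH g) (shiftH f);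
  shiftH_add : forall X Y (f g : Mor X Y), shiftH (f + g) = shiftH f + shiftH g;
  shiftH_bij : forall X Y, bijective (@shiftH X Y);
  shift_esurj : forall X, exists (Y : Obj) (f : Mor (shift Y) X) (g : Mor X (shift Y)),
      mcomp g f = idm (shift Y) /\ mcomp f g = idm X;
  dist : forall X Y Z, Mor X Y -> Mor Y Z -> Mor Z (shift X) -> Prop;
  TR1_iso : forall X Y Z X' Y' Z' (f : Mor X Y) (g : Mor Y Z) (h : Mor Z (shift X))
      (f' : Mor X' Y') (g' : Mor Y' Z') (h' : Mor Z' (shift X'))
      (u : Mor X X') (v : Mor Y Y') (w : Mor Z Z')
      (u' : Mor X' X) (v' : Mor Y' Y) (w' : Mor Z' Z),
      mcomp u' u = idm X -> mcomp u u' = idm X' ->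
      mcomp v' v = idm Y -> mcomp v v' = idm Y' ->
      mcomp w' w = idm Z -> mcomp w w' = idm Z' ->
      mcomp v f = mcomp f' u -> mcomp w g = mcomp g' v ->
      mcomp (shiftH u) h = mcomp h' w ->
      dist f g h -> dist f' g' h';
  TR1_id : forall X, dist (idm X) (0 : Mor X zobj) (0 : Mor zobj (shift X));
  TR1_ext : forall X Y (f : Mor X Y), exists (Z : Obj) (g : Mor Y Z) (h : Mor Z (shift X)),
      dist f g h;
  TR2 : forall X Y Z (f : Mor X Y) (g : Mor Y Z) (h : Mor Z (shift X)),
      dist f g h <-> dist g h (- shiftH f);
  TR3 : forall X Y Z X' Y' Z' (f : Mor X Y) (g : Mor Y Z) (h : Mor Z (shift X))
      (f' : Mor X' Y') (g' : Mor Y' Z') (h' : Mor Z' (shift X'))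
      (u : Mor X X') (v : Mor Y Y'),
      dist f g h -> dist f' g' h' -> mcomp v f = mcomp f' u ->
      exists w : Mor Z Z', mcomp w g = mcomp g' v /\ mcomp (shiftH u) h = mcomp h' w;
  TR4 : forall X Y Z Z' X' Y' (u : Mor X Y) (v : Mor Y Z)
      (j : Mor Y Z') (k : Mor Z' (shift X))
      (l : Mor Z X') (i : Mor X' (shift Y))
      (m : Mor Z Y') (n : Mor Y' (shift X)),
      dist u j k -> dist v l i -> dist (mcomp v u) m n ->
      exists (f : Mor Z' Y') (g : Mor Y' X'),
      [/\ dist f g (mcomp (shiftH j) i),
          mcomp f j = mcomp m v, mcomp n f = k,
          mcomp g m = l & mcomp i g = mcomp (shiftH u) n]
}.

Arguments mcomp {t X Y Z}.
Arguments idm {t}.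
Arguments shift {t}.
Arguments shiftH {t X Y}.
Arguments dist {t X Y Z}.

Section Sub.
Variable T : TriCat.

Definition is_iso (X Y : T) (f : Mor X Y) : Prop :=
  exists g : Mor Y X, mcomp g f = idm X /\ mcomp f g = idm Y.

Definition is_zero_obj (X : T) : Prop := idm X = 0.

Definition is_biprod (X Y B : T) : Prop :=
  exists (i1 : Mor X B) (i2 : Mor Y B) (p1 : Mor B X) (p2 : Mor B Y),
    [/\ mcomp p1 i1 = idm X, mcomp p2 i2 = idm Y, mcomp p1 i2 = 0,
        mcomp p2 i1 = 0 & mcomp i1 p1 + mcomp i2 p2 = idm B].

(* A (full) subcategory: additive, closed under isomorphisms and direct summands *)
Definition is_subcat (P : T -> Prop) : Prop :=
  [/\ (forall X, is_zero_obj X -> P X),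
      (forall X Y B, is_biprod X Y B -> P X -> P Y -> P B),
      (forall X Y (f : Mor X Y), is_iso f -> P X -> P Y) &
      (forall X Y B, is_biprod X Y B -> P B -> P X)].

Definition star (M N : T -> Prop) (C : T) : Prop :=
  exists (X Z : T) (f : Mor X C) (g : Mor C Z) (h : Mor Z (shift X)),
    [/\ dist f g h, M X & N Z].

Definition shift_up (P : T -> Prop) (X : T) : Prop :=
  exists (Y : T) (f : Mor (shift Y) X), is_iso f /\ P Y.

(* P[-1] : objects X with X[1] in P (P closed under isos, [1] an equivalence) *)
Definition shift_down (P : T -> Prop) (X : T) : Prop := P (shift X).

Definition inter (P Q : T -> Prop) (X : T) : Prop := P X /\ Q X.

Definition ext1_vanish (P Q : T -> Prop) : Prop :=
  forall X Y, P X -> Q Y -> forall f : Mor X (shift Y), f = 0.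

Definition cotorsion_pair (U V : T -> Prop) : Prop :=
  [/\ is_subcat U, is_subcat V, ext1_vanish U V &
      forall C, star U (shift_up V) C].

Definition twin_cotorsion_pair (S Tc U V : T -> Prop) : Prop :=
  [/\ cotorsion_pair S Tc, cotorsion_pair U V & ext1_vanish S V].

Definition Wcore (Tc U : T -> Prop) := inter Tc U.
Definition Cminus (S Tc U : T -> Prop) := star (shift_down S) (Wcore Tc U).
Definition Cplus (Tc U V : T -> Prop) := star (Wcore Tc U) (shift_up V).
Definition Heart (S Tc U V : T -> Prop) := inter (Cplus Tc U V) (Cminus S Tc U).

End Sub.

From Pilot Require Import Defs.
From mathcomp Require Import all_boot all_algebra.
Import GRing.Theory.
Local Open Scope ring_scope.

(* Octahedral axiom applied to S1 -b-> U0 -a-> C exhibits Z as an extension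
   of V0[1] by T1[1], and T1[1] lies in U because every map T1[1] -> V[1]
   vanishes on U0 (Ext^1(U,V) = 0) hence factors through S1[1], where it
   vanishes since Ext^1(S,V) = 0.  If moreover A -> C -> W' -> A[1] with
   A[1] in S and W' in W, take an (S,T)-approximation K -> Z -> T' -> K[1];
   a map T' -> V[1] vanishes successively on A, on C and on Z, hence is
   zero, so T' lies in T /\ U = W and Z lies in S[-1] * W. *)

Section TriangulatedFacts.
Context {T : TriCat}.

Lemma comp0l {X Y Z : T} (f : Mor X Y) : mcomp (0 : Mor Y Z) f = 0.
Proof. by apply/(addrI (mcomp 0 f)); rewrite -compDl !addr0. Qed.

Lemma comp0r {X Y Z : T} (g : Mor Y Z) : mcomp g (0 : Mor X Y) = 0.
Proof. by apply/(addrI (mcomp g 0)); rewrite -compDr !addr0. Qed.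

Lemma compNl {X Y Z : T} (g : Mor Y Z) (f : Mor X Y) :
  mcomp (- g) f = - mcomp g f.
Proof. by apply/eqP; rewrite -addr_eq0 -compDl addNr comp0l. Qed.

Lemma compNr {X Y Z : T} (g : Mor Y Z) (f : Mor X Y) :
  mcomp g (- f) = - mcomp g f.
Proof. by apply/eqP; rewrite -addr_eq0 -compDr addNr comp0r. Qed.

Lemma compBl {X Y Z : T} (g1 g2 : Mor Y Z) (f : Mor X Y) :
  mcomp (g1 - g2) f = mcomp g1 f - mcomp g2 f.
Proof. by rewrite compDl compNl. Qed.

Lemma compBr {X Y Z : T} (g : Mor Y Z) (f1 f2 : Mor X Y) :
  mcomp g (f1 - f2) = mcomp g f1 - mcomp g f2.
Proof. by rewrite compDr compNr. Qed.

Lemma shiftH0 {X Y : T} : shiftH (0 : Mor X Y) = 0.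
Proof. by apply/(addrI (shiftH (0 : Mor X Y))); rewrite -shiftH_add !addr0. Qed.

Lemma shiftH_inj {X Y : T} : injective (@shiftH T X Y).
Proof. exact: bij_inj (shiftH_bij X Y). Qed.

Lemma shiftH_surj {X Y : T} (g : Mor (shift X) (shift Y)) :
  exists f : Mor X Y, shiftH f = g.
Proof. by case: (shiftH_bij X Y) => h _ K; exists (h g). Qed.

Lemma dist_rot {X Y Z : T} {f : Mor X Y} {g : Mor Y Z} {h : Mor Z (shift X)} :
  dist f g h -> dist g h (- shiftH f).
Proof. by move/TR2. Qed.

Lemma dist_shift {X Y Z : T} {f : Mor X Y} {g : Mor Y Z} {h : Mor Z (shift X)} :
  dist f g h <-> dist (- shiftH f) (- shiftH g) (- shiftH h).
Proof.
by split; [move/dist_rot/dist_rot/dist_rot | do 3 move/(proj2 (TR2 _ _ _))].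
Qed.

Lemma dist_comp0 {X Y Z : T} {f : Mor X Y} {g : Mor Y Z} {h : Mor Z (shift X)} :
  dist f g h -> mcomp g f = 0.
Proof.
move=> H; have [w [Hw _]] := TR3 (TR1_id X) H (u := idm X) (v := f) erefl.
by rewrite -Hw comp0r.
Qed.

Lemma dist_factor {X Y Z W : T} {f : Mor X Y} {g : Mor Y Z} {h : Mor Z (shift X)}
    {phi : Mor W Y} :
  dist f g h -> mcomp g phi = 0 -> exists s : Mor W X, mcomp f s = phi.
Proof.
move=> H gphi.
have Hc : mcomp (0 : Mor (zobj T) Z) (0 : Mor W (zobj T)) = mcomp g phi.
  by rewrite gphi comp0l.
have [w [_ Hw]] := TR3 (dist_rot (TR1_id W)) (dist_rot H) Hc.
have [s Hs] := shiftH_surj w; exists s; apply: shiftH_inj; apply: oppr_inj.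
by move: Hw; rewrite -Hs shiftH_id compNr compm1 compNl -shiftH_comp.
Qed.

Lemma dist_zero_id (W : T) :
  dist (0 : Mor (zobj T) W) (idm W) (0 : Mor W (shift (zobj T))).
Proof.
have Z0 : idm (shift (zobj T)) = 0 by rewrite -shiftH_id zobj_zero shiftH0.
apply/TR2; rewrite shiftH0 oppr0.
apply: (TR1_iso (u := idm W) (v := idm W) (w := 0) (u' := idm W) (v' := idm W)
          (w' := 0) _ _ _ _ _ _ _ _ _ (TR1_id W)); rewrite ?comp1m //.
- by rewrite comp0l zobj_zero.
- by rewrite comp0l Z0.
- by rewrite !comp0l.
- by rewrite !comp0r.
Qed.

Lemma dist_cofactor {X Y Z W : T} {f : Mor X Y} {g : Mor Y Z} {h : Mor Z (shift X)}
    {psi : Mor Y W} :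
  dist f g h -> mcomp psi f = 0 -> exists t : Mor Z W, mcomp t g = psi.
Proof.
move=> H psif.
have Hc : mcomp psi f = mcomp (0 : Mor (zobj T) W) (0 : Mor X (zobj T)).
  by rewrite psif comp0l.
have [w [Hw _]] := TR3 H (dist_zero_id W) Hc.
by exists w; rewrite Hw comp1m.
Qed.

Lemma dist_cofactor_eq0 {X Y Z W : T} {f : Mor X Y} {g : Mor Y Z}
    {h : Mor Z (shift X)} {psi : Mor Y W} :
  dist f g h -> (forall t : Mor Z W, t = 0) -> mcomp psi f = 0 -> psi = 0.
Proof.
move=> H Zorth psif; have [t <-] := dist_cofactor H psif.
by rewrite (Zorth t) comp0l.
Qed.

Lemma dist_iso_ends {X Y Z X' Z' : T} {f : Mor X Y} {g : Mor Y Z}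
    {h : Mor Z (shift X)} (e : Mor X' X) (e' : Mor X X') (k : Mor Z' Z)
    (k' : Mor Z Z') :
  mcomp e' e = idm X' -> mcomp e e' = idm X ->
  mcomp k' k = idm Z' -> mcomp k k' = idm Z ->
  dist f g h -> dist (mcomp f e) (mcomp k' g) (mcomp (mcomp (shiftH e') h) k).
Proof.
move=> ee' e'e kk' k'k.
apply: (TR1_iso (u := e') (v := idm Y) (w := k') (u' := e) (v' := idm Y) (w' := k));
  rewrite ?comp1m ?compm1 //.
- by rewrite -Defs.compA e'e compm1.
- by rewrite -Defs.compA k'k compm1.
Qed.

Lemma dist_split_mono_biprod {X Y K : T} {s : Mor X Y} {r : Mor Y X} {g : Mor Y K}
    {h : Mor K (shift X)} :
  mcomp r s = idm X -> dist s g h -> is_biprod X K Y.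
Proof.
move=> rs H.
have gs : mcomp g s = 0 := dist_comp0 H.
have h0 : h = 0.
  have /eqP := dist_comp0 (dist_rot (dist_rot H)).
  rewrite compNl oppr_eq0 => /eqP sh.
  by rewrite -(comp1m h) -shiftH_id -rs shiftH_comp -Defs.compA sh comp0r.
have [r0 gr0] : exists r0 : Mor K Y, mcomp g r0 = idm K.
  by apply: (dist_factor (dist_rot H)); rewrite h0 comp0l.
pose r' := r0 - mcomp s (mcomp r r0).
have gr' : mcomp g r' = idm K.
  by rewrite /r' compBr gr0 Defs.compA gs comp0l subr0.
have rr' : mcomp r r' = 0 by rewrite /r' compBr Defs.compA rs comp1m subrr.
clearbody r'.
pose e := idm Y - mcomp s r - mcomp r' g.
have es : mcomp e s = 0.
  rewrite /e !compBl comp1m -!Defs.compA rs gs compm1 comp0r.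
  by rewrite subrr subr0.
have e0 : e = 0.
  have [t te] := dist_cofactor H es.
  suff t0 : t = 0 by rewrite -te t0 comp0l.
  rewrite -(compm1 t) -gr' Defs.compA te /e !compBl comp1m -!Defs.compA.
  by rewrite rr' gr' comp0r compm1 subr0 subrr.
exists s, r', r, g; split => //.
by move/eqP: e0; rewrite /e subr_eq0 subr_eq => /eqP ->; rewrite addrC.
Qed.

Lemma subcat_split_summand (P : T -> Prop) {X Y : T} (s : Mor X Y) (r : Mor Y X) :
  is_subcat P -> mcomp r s = idm X -> P Y -> P X.
Proof.
case=> _ _ _ Psummand rs PY; have [K [g [h H]]] := TR1_ext s.
exact: Psummand X K Y (dist_split_mono_biprod rs H) PY.
Qed.

End TriangulatedFacts.

Section CotorsionPairs.
Context {T : TriCat}.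

Lemma cotorsion_left_perp {U V : T -> Prop} {X : T} :
  cotorsion_pair U V ->
  (forall V2, V V2 -> forall phi : Mor X (shift V2), phi = 0) -> U X.
Proof.
case=> Usub _ _ Udec Vperp.
have [X0 [Z0 [f [g [h [H UX0 [V2 [e [[e' [e'e ee']] VV2]]]]]]]]] := Udec X.
have g0 : g = 0.
  by rewrite -(comp1m g) -ee' -Defs.compA (Vperp V2 VV2 (mcomp e' g)) comp0r.
have [s fs] : exists s : Mor X X0, mcomp f s = idm X.
  by apply: (dist_factor H); rewrite g0 comp0l.
exact: subcat_split_summand Usub fs UX0.
Qed.

Lemma ext1_vanish_shift_down {S Tc : T -> Prop} {A Y : T} :
  ext1_vanish S Tc -> S (shift A) -> Tc Y -> forall f : Mor A Y, f = 0.
Proof.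
by move=> vST SA TY f; apply: shiftH_inj; rewrite shiftH0; apply: vST.
Qed.

Lemma cotorsion_star_shift_down {S Tc : T -> Prop} (Z : T) :
  cotorsion_pair S Tc -> star (shift_down S) Tc Z.
Proof.
case=> Ssub _ _ Sdec.
have [X0 [Z0 [f [g [h [H SX0 [T' [e [[e' [e'e ee']] TT']]]]]]]]] := Sdec (shift Z).
have [K [k [k' [k'k kk']]]] := shift_esurj X0.
have [sg Hsg] := shiftH_surj (- mcomp f k).
have [tau Htau] := shiftH_surj (- mcomp e' g).
have [rho Hrho] := shiftH_surj (- mcomp (mcomp (shiftH k') h) e).
exists K, T', sg, tau, rho; split => //.
- by apply/dist_shift; rewrite Hsg Htau Hrho !opprK; apply: dist_iso_ends H.
- by case: Ssub => _ _ Siso _; apply: (Siso _ _ k') SX0; exists k.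
Qed.

End CotorsionPairs.

Section TwinCotorsionPair.
Context {T : TriCat} {S Tc U V : T -> Prop}.
Hypotheses (cpST : cotorsion_pair S Tc) (cpUV : cotorsion_pair U V)
  (vSV : ext1_vanish S V).

Let vST : ext1_vanish S Tc. Proof. by case: cpST. Qed.
Let vUV : ext1_vanish U V. Proof. by case: cpUV. Qed.

Lemma U_of_dist_U_S {U0 T' S' : T} {u : Mor U0 T'} {v : Mor T' S'}
    {w : Mor S' (shift U0)} :
  U U0 -> S S' -> dist u v w -> U T'.
Proof.
move=> UU0 SS' H; apply: cotorsion_left_perp cpUV _ => V2 VV2 phi.
by apply: (dist_cofactor_eq0 H) => [t|]; [apply: vSV | apply: vUV].
Qed.

Lemma Cplus_cone {C U0 V0 T1 S1 Z : T} {x : Mor V0 U0} {a : Mor U0 C}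
    {y : Mor C (shift V0)} {x2 : Mor T1 S1} {b : Mor S1 U0} {y2 : Mor U0 (shift T1)}
    {zC : Mor C Z} {w : Mor Z (shift S1)} :
  U U0 -> V V0 -> S (shift S1) -> Tc (shift T1) ->
  dist x a y -> dist x2 b y2 -> dist (mcomp a b) zC w -> Cplus Tc U V Z.
Proof.
move=> UU0 VV0 SS1 TT1 tri1 tri2 tri3.
have [f [g [Hfg _ _ _ _]]] := TR4 (dist_rot tri2) (dist_rot tri1) tri3.
exists (shift T1), (shift V0), f, g, (mcomp (shiftH y2) (- shiftH x)); split => //.
- by split => //; apply: U_of_dist_U_S UU0 SS1 (dist_rot (dist_rot tri2)).
- by exists V0, (idm (shift V0)); split => //; exists (idm _); rewrite comp1m.
Qed.

Lemma Cminus_cone {S1 C Z : T} {c : Mor S1 C} {zC : Mor C Z} {w : Mor Z (shift S1)} :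
  S (shift S1) -> dist c zC w -> Cminus S Tc U C -> Cminus S Tc U Z.
Proof.
move=> SS1 tri [A [W [al [be [ga [Hc SA [_ UW]]]]]]].
have [K [T' [sg [tau [rho [Hd SK TT']]]]]] := cotorsion_star_shift_down Z cpST.
exists K, T', sg, tau, rho; split => //; split => //.
apply: cotorsion_left_perp cpUV _ => V2 VV2 phi.
have SV2 X : S X -> forall t : Mor X (shift V2), t = 0 by move=> SX t; apply: vSV.
apply: (dist_cofactor_eq0 (dist_rot Hd) (SV2 _ SK)).
apply: (dist_cofactor_eq0 (dist_rot tri) (SV2 _ SS1)).
apply: (dist_cofactor_eq0 Hc) => [t|]; first exact: vUV.
have tau_zC_al : mcomp tau (mcomp zC al) = 0
  := ext1_vanish_shift_down vST SA TT' _.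
by rewrite -!Defs.compA tau_zC_al comp0r.
Qed.

End TwinCotorsionPair.

Theorem claim3p4 (T : TriCat) (S Tc U V : T -> Prop)
    (twin : twin_cotorsion_pair S Tc U V)
    (C U0 V0 : T) (x : Mor V0 U0) (a : Mor U0 C) (y : Mor C (shift V0))
    (hU0 : U U0) (hV0 : V V0) (tri1 : dist x a y)
    (T1 S1 : T) (x2 : Mor T1 S1) (b : Mor S1 U0) (y2 : Mor U0 (shift T1))
    (hS1 : S (shift S1)) (hT1 : Tc (shift T1)) (tri2 : dist x2 b y2)
    (Z : T) (zC : Mor C Z) (w : Mor Z (shift S1))
    (tri3 : dist (mcomp a b) zC w) :
  Cplus Tc U V Z /\ (Cminus S Tc U C -> Heart S Tc U V Z).
Proof.
case: twin => cpST cpUV vSV.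
have Zplus : Cplus Tc U V Z := Cplus_cone cpUV vSV hU0 hV0 hS1 hT1 tri1 tri2 tri3.
split=> // Cminus_C; split=> //.
exact: (Cminus_cone cpST cpUV vSV hS1 tri3 Cminus_C).
Qed.
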